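(* Let $\rho_{AB}\in M_2(\mathbb{C})\otimes M_d(\mathbb{C})$ be a bipartite state with $\mathrm{rank}(\rho_{AB})=2$. Let $\{P_{a|0}\}_{a=0}^1$ and $\{P_{a|1}\}_{a=0}^1$ be two nontrivial projective measurements on subsystem $A$ which are different up to relabeling, and set $\rho_{a|x}=\mathrm{Tr}_A\big((P_{a|x}\otimes\mathbb{1})\rho_{AB}\big)$. Then: (i) if one of the four operators $\rho_{a|x}$ is zero, then the other three have rank two and are pairwise proportional; (ii) if $x_1\ne x_2$ and $\rho_{0|x_1},\rho_{1|x_1}$ both have rank one, then either $\rho_{0|x_2}$ and $\rho_{1|x_2}$ both have rank two, or all four $\rho_{a|x}$ have rank one and are pairwise proportional.
   Context: A nontrivial projective measurement on $\mathbb{C}^2$ is a pair $\{P_0,P_1\}$ of rank-one orthogonal projections with $P_0+P_1=\mathbb{1}$. Two such measurements $\{P_{a|0}\}_{a=0}^1,\{P_{a|1}\}_{a=0}^1$ are ''different up to relabeling'' if $P_{0|0}\ne P_{0|1}$ and $P_{0|0}\ne P_{1|1}$. *)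

(* Linear algebra over an arbitrary numClosedFieldType C
   (e.g. the complex numbers), with conjugation conjC. *)
From HB Require Import structures.
From mathcomp Require Import all_boot all_order all_algebra.
Set Implicit Arguments. Unset Strict Implicit. Unset Printing Implicit Defensive.
Import Order.TTheory GRing.Theory Num.Theory Num.Def.
Local Open Scope ring_scope.

Definition hadj (C : numClosedFieldType) m n (A : 'M[C]_(m, n)) : 'M[C]_(n, m) :=
  (map_mx conjC A)^T.

Definition hermitian_mx (C : numClosedFieldType) n (A : 'M[C]_n) : Prop :=
  hadj A = A.

Definition psd (C : numClosedFieldType) n (A : 'M[C]_n) : Prop :=
  hermitian_mx A /\ forall v : 'cV[C]_n, 0 <= (hadj v *m A *m v) 0 0.

Definition is_state (C : numClosedFieldType) n (rho : 'M[C]_n) : Prop :=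
  psd rho /\ \tr rho = 1.

Definition rank1_proj (C : numClosedFieldType) (P : 'M[C]_2) : Prop :=
  P *m P = P /\ hermitian_mx P /\ \rank P = 1%N.

Definition nontriv_proj_meas (C : numClosedFieldType) (P : 'I_2 -> 'M[C]_2) : Prop :=
  rank1_proj (P 0) /\ rank1_proj (P 1) /\ P 0 + P 1 = 1.

Definition diff_up_to_relabel (C : numClosedFieldType) (P : 'I_2 -> 'I_2 -> 'M[C]_2) : Prop :=
  P 0 0 != P 0 1 /\ P 0 0 != P 1 1.

(* Tensor convention: the index of C^2 (x) C^d for basis e_i (x) f_j is
   mxvec_index i j.  Tr_A((Q (x) 1) rho) as a d x d matrix:
   entry (j,k) = sum_i sum_i' Q i i' * rho (i',j) (i,k). *)
Definition ptrA_mul (C : numClosedFieldType) d (Q : 'M[C]_2) (rho : 'M[C]_(2 * d))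
  : 'M[C]_d :=
  \matrix_(j < d, k < d)
    \sum_(i < 2) \sum_(i' < 2) Q i i' * rho (mxvec_index i' j) (mxvec_index i k).

Definition proportional (C : numClosedFieldType) m n (A B : 'M[C]_(m, n)) : Prop :=
  exists c : C, c != 0 /\ A = c *: B.

(* Write rho = Psi Psi^* with rank Psi = 2 and each projection as P = w w^*.  Then
   rho_{a|x} = M_w M_w^* with M_w = (<w| (x) 1) Psi, so rank rho_{a|x} = rank M_w, and for
   an orthonormal basis u, v of C^2 we have M_z = <z|u> M_u + <z|v> M_v, while the rows of
   Psi lie in the span of the rows of M_u and M_v.  Since the two measurements differ up to
   relabelling, each vector of one of them has nonzero overlap with both vectors of the
   other.
   (i) If M_u = 0, then M_v has the row space of Psi and every other M_z is a nonzero
   multiple of M_v.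
   (ii) If M_u = a x and M_v = b y have rank one, then x and y are independent, since they
   span the rows of Psi.  Hence for z overlapping both u and v the rank of
   M_z = <z|u> a x + <z|v> b y is the dimension of span {a, b}: either it is 2 for every
   such z, or b is a multiple of a and every M_z M_z^* is a nonzero multiple of a a^*. *)

From HB Require Import structures.
From mathcomp Require Import all_boot all_order all_algebra.
From mathcomp Require Import ring.
Set Implicit Arguments. Unset Strict Implicit. Unset Printing Implicit Defensive.
Import Order.TTheory GRing.Theory Num.Theory Num.Def.
Local Open Scope ring_scope.

Section Adjoint.
Variable C : numClosedFieldType.

Lemma hadjE m n (A : 'M[C]_(m, n)) i j : hadj A i j = (A j i)^*.
Proof. by rewrite /hadj !mxE. Qed.

Lemma hadjK m n (A : 'M[C]_(m, n)) : hadj (hadj A) = A.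
Proof. by apply/matrixP => i j; rewrite !hadjE conjCK. Qed.

Lemma hadjM m n p (A : 'M[C]_(m, n)) (B : 'M[C]_(n, p)) :
  hadj (A *m B) = hadj B *m hadj A.
Proof. by rewrite /hadj map_mxM trmx_mul. Qed.

Lemma hadjZ m n a (A : 'M[C]_(m, n)) : hadj (a *: A) = a^* *: hadj A.
Proof. by apply/matrixP => i j; rewrite /hadj !mxE rmorphM. Qed.

Lemma mul_hadj_scale m n g (A : 'M[C]_(m, n)) :
  (g *: A) *m hadj (g *: A) = (g * g^*) *: (A *m hadj A).
Proof. by rewrite hadjZ -scalemxAl -scalemxAr scalerA. Qed.

Lemma mul_row_hadj n (x : 'rV[C]_n) : (x *m hadj x) 0 0 = \sum_k `|x 0 k| ^+ 2.
Proof. by rewrite mxE; apply: eq_bigr => k _; rewrite hadjE normCK. Qed.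

Lemma mul_row_hadj_ge0 n (x : 'rV[C]_n) : 0 <= (x *m hadj x) 0 0.
Proof. by rewrite mul_row_hadj sumr_ge0 // => k _; rewrite exprn_ge0. Qed.

Lemma mul_row_hadj_eq0 n (x : 'rV[C]_n) : ((x *m hadj x) 0 0 == 0) = (x == 0).
Proof.
apply/idP/eqP => [|->]; last by rewrite mul0mx mxE.
rewrite mul_row_hadj psumr_eq0 => [/allP x0|k _]; last exact: exprn_ge0.
apply/rowP => k; have := x0 k (mem_index_enum k).
by rewrite mxE sqrf_eq0 normr_eq0 => /eqP.
Qed.

Lemma mxrank_mul_hadj m n (M : 'M[C]_(m, n)) : \rank (M *m hadj M) = \rank M.
Proof.
apply/mxrank_injP; rewrite -submx0; apply/row_subP => i.
have /submxP [y yM] : (row i (M :&: kermx (hadj M)) <= M)%MS.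
  exact: submx_trans (row_sub _ _) (capmxSl _ _).
have /sub_kermxP yM0 : (row i (M :&: kermx (hadj M)) <= kermx (hadj M))%MS.
  exact: submx_trans (row_sub _ _) (capmxSr _ _).
by rewrite submx0 -mul_row_hadj_eq0 {2}yM hadjM mulmxA yM0 mul0mx mxE.
Qed.

Lemma hermitian_mx_normal n (A : 'M[C]_n) : hermitian_mx A -> A \is normalmx.
Proof. by move=> hA; apply/normalmxP; rewrite -map_trmx -/(hadj A) hA. Qed.

Lemma psd_factor n (A : 'M[C]_n) : psd A -> exists Psi : 'M[C]_n, A = Psi *m hadj Psi.
Proof.
case=> /hermitian_mx_normal /orthomx_spectralP Asp A_ge0.
set U := spectralmx A in Asp; set D := spectral_diag A in Asp.
have U_unitary : U \is unitarymx by apply: spectral_unitarymx.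
have invU : invmx U = hadj U by rewrite invmx_unitary // /hadj map_trmx.
have UU : U *m hadj U = 1%:M by rewrite -invU mulmxV // unitarymx_unit.
have D_ge0 k : 0 <= D 0 k.
  have -> : D 0 k = (row k U *m A *m hadj (row k U)) 0 0.
    have -> : D 0 k = (U *m A *m hadj U) k k.
      by rewrite Asp invU !mulmxA UU mul1mx -mulmxA UU mulmx1 mxE eqxx mulr1n.
    rewrite !mxE; apply: eq_bigr => j _; rewrite !mxE; congr (_ * _).
    by apply: eq_bigr => i _; rewrite !mxE.
  by have := A_ge0 (hadj (row k U)); rewrite hadjK.
exists (hadj U *m diag_mx (map_mx sqrtC D)).
rewrite hadjM hadjK mulmxA -(mulmxA _ _ (hadj _)) Asp invU.
congr (_ *m _ *m _); apply/matrixP => i j.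
rewrite mul_diag_mx !mxE.
case: (eqVneq i j) => [<-|_]; last by rewrite !mulr0n rmorph0 mulr0.
by rewrite !mulr1n geC0_conj ?sqrtC_ge0 // -expr2 sqrtCK.
Qed.

End Adjoint.

Section RankOne.
Variable C : numClosedFieldType.

Lemma mxrank1_factor m n (M : 'M[C]_(m, n)) :
  \rank M = 1%N -> exists (a : 'cV[C]_m) (t : 'rV[C]_n), M = a *m t.
Proof.
move=> rkM; have := mulmx_base M; move: (col_base M) (row_base M).
by rewrite rkM => a t <-; exists a, t.
Qed.

Lemma mul_hadj_col_row m n (a : 'cV[C]_m) (t : 'rV[C]_n) :
  (a *m t) *m hadj (a *m t) = (t *m hadj t) 0 0 *: (a *m hadj a).
Proof.
rewrite hadjM mulmxA -(mulmxA a) {1}(mx11_scalar (t *m hadj t)) mul_mx_scalar.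
by rewrite -scalemxAl.
Qed.

Lemma mul_hadj_rank1 m n (a : 'cV[C]_m) (t : 'rV[C]_n) :
  \rank (a *m t) = 1%N ->
  exists2 s, s != 0 & (a *m t) *m hadj (a *m t) = s *: (a *m hadj a).
Proof.
move=> rk1; exists ((t *m hadj t) 0 0); last exact: mul_hadj_col_row.
apply/eqP => s0; move: rk1.
by rewrite -mxrank_mul_hadj mul_hadj_col_row s0 scale0r mxrank0.
Qed.

Lemma rank1_proj_outer (P : 'M[C]_2) :
  rank1_proj P -> exists w : 'cV[C]_2, P = w *m hadj w.
Proof.
case=> PP [hP /mxrank1_factor [a [t Pat]]].
have PE : P = (t *m hadj t) 0 0 *: (a *m hadj a).
  by rewrite -{1}PP -{2}hP Pat mul_hadj_col_row.
exists (sqrtC ((t *m hadj t) 0 0) *: a).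
by rewrite PE mul_hadj_scale geC0_conj ?sqrtC_ge0 ?mul_row_hadj_ge0 // -expr2 sqrtCK.
Qed.

End RankOne.

Section RankRowMx.
Variable F : fieldType.

Lemma mxrank_row_mxl m n1 n2 (A : 'M[F]_(m, n1)) (B : 'M[F]_(m, n2)) :
  (\rank A <= \rank (row_mx A B))%N.
Proof.
have := mxrankM_maxl (row_mx A B) (col_mx 1%:M 0).
by rewrite mul_row_col mulmx1 mulmx0 addr0.
Qed.

Lemma mxrank_row_mx_scale m n1 n2 a b (A : 'M[F]_(m, n1)) (B : 'M[F]_(m, n2)) :
  a != 0 -> b != 0 -> \rank (row_mx (a *: A) (b *: B)) = \rank (row_mx A B).
Proof.
move=> a0 b0; rewrite -mxrank_tr -[RHS]mxrank_tr !tr_row_mx -!addsmxE !linearZ /=.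
by rewrite (adds_eqmx (eqmx_scale _ a0) (eqmx_scale _ b0)).
Qed.

Lemma col_sub_of_mxrank_row_mx m n1 n2 (A : 'M[F]_(m, n1)) (B : 'M[F]_(m, n2)) :
  \rank (row_mx A B) = \rank A -> exists D, B = A *m D.
Proof.
rewrite -mxrank_tr -[\rank A]mxrank_tr tr_row_mx -addsmxE => rkAB.
have /andP [_ sAB] : (A^T == A^T + B^T)%MS.
  by rewrite -(mxrank_leqif_eq (addsmxSl _ _)).2 rkAB.
have /submxP [D BD] := submx_trans (addsmxSr A^T B^T) sAB.
by exists D^T; rewrite -[B]trmxK BD trmx_mul trmxK.
Qed.

End RankRowMx.

Section Contraction.
Variable C : numClosedFieldType.

Definition braket n (w u : 'cV[C]_n) : C := (hadj w *m u) 0 0.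

Lemma braketC n (u z : 'cV[C]_n) : braket u z = (braket z u)^*.
Proof. by rewrite /braket -hadjE hadjM hadjK. Qed.

Lemma hadj_basis n (u v z : 'cV[C]_n) :
  u *m hadj u + v *m hadj v = 1%:M ->
  hadj z = braket z u *: hadj u + braket z v *: hadj v.
Proof.
move=> uv1; rewrite -[hadj z]mulmx1 -uv1 mulmxDr !mulmxA.
by rewrite (mx11_scalar (hadj z *m u)) (mx11_scalar (hadj z *m v)) !mul_scalar_mx.
Qed.

Variables d m : nat.
Implicit Types (u v z : 'cV[C]_2) (Psi : 'M[C]_(2 * d, m)).

(* (<u| (x) 1) Psi, in the tensor convention of ptrA_mul *)
Definition braA u Psi : 'M[C]_(d, m) :=
  \matrix_(j, l) \sum_(i < 2) (u i 0)^* * Psi (mxvec_index i j) l.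

Lemma sum_ord2 (F : 'I_2 -> C) : \sum_(i < 2) F i = F 0 + F 1.
Proof. by rewrite big_ord_recl big_ord1; congr (F _ + F _); apply: val_inj. Qed.

Lemma ptrA_mul_outer u Psi :
  ptrA_mul (u *m hadj u) (Psi *m hadj Psi) = braA u Psi *m hadj (braA u Psi).
Proof.
apply/matrixP => j k; rewrite /ptrA_mul !mxE !sum_ord2 !mxE !big_ord1 !mxE.
rewrite !mulr_sumr -!big_split; apply: eq_bigr => l _; rewrite ?mxE !sum_ord2 ?mxE.
by rewrite !rmorphD !rmorphM /= !conjCK; ring.
Qed.

Lemma braA_linear u v z a b Psi :
  hadj z = a *: hadj u + b *: hadj v ->
  braA z Psi = a *: braA u Psi + b *: braA v Psi.
Proof.
move=> /matrixP zE; apply/matrixP => j l; rewrite !mxE !mulr_sumr -big_split.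
apply: eq_bigr => i _; have := zE 0 i; rewrite !mxE => ->.
by rewrite mulrDl !mulrA.
Qed.

Lemma braA_basis u v z Psi :
  u *m hadj u + v *m hadj v = 1%:M ->
  braA z Psi = braket z u *: braA u Psi + braket z v *: braA v Psi.
Proof. by move=> /(hadj_basis z); apply: braA_linear. Qed.

Lemma braA_sub u Psi : (braA u Psi <= Psi)%MS.
Proof.
apply/row_subP => j.
have -> : row j (braA u Psi) = \sum_(i < 2) (u i 0)^* *: row (mxvec_index i j) Psi.
  by apply/rowP => l; rewrite !mxE summxE; apply: eq_bigr => i _; rewrite !mxE.
by apply: summx_sub => i _; apply/scalemx_sub/row_sub.
Qed.

Lemma sub_braA_basis u v Psi :
  u *m hadj u + v *m hadj v = 1%:M -> (Psi <= braA u Psi + braA v Psi)%MS.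
Proof.
move=> /matrixP uv1; apply/row_subP => r; case/mxvec_indexP: r => i j.
have -> : row (mxvec_index i j) Psi =
    u i 0 *: row j (braA u Psi) + v i 0 *: row j (braA v Psi).
  apply/rowP => l; rewrite !mxE !mulr_sumr -big_split /=.
  have uvE i' : u i 0 * (u i' 0)^* + v i 0 * (v i' 0)^* = (i == i')%:R.
    by have := uv1 i i'; rewrite !mxE !big_ord1 !hadjE.
  rewrite (bigD1 i) //= big1 => [|i' ne].
    by rewrite !mulrA -mulrDl uvE eqxx mul1r addr0.
  by rewrite !mulrA -mulrDl uvE eq_sym (negPf ne) mul0r.
by apply: addmx_sub_adds; apply/scalemx_sub/row_sub.
Qed.

Lemma braA_eq0_eqmx u v Psi :
  u *m hadj u + v *m hadj v = 1%:M -> braA u Psi = 0 -> (braA v Psi == Psi)%MS.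
Proof.
move=> uv1 u0; rewrite /eqmx braA_sub /=.
by have := sub_braA_basis Psi uv1; rewrite u0 adds0mx.
Qed.

Lemma braA_rank1_dichotomy u v Psi :
  \rank Psi = 2%N -> u *m hadj u + v *m hadj v = 1%:M ->
  \rank (braA u Psi) = 1%N -> \rank (braA v Psi) = 1%N ->
  (forall z, braket z u != 0 -> braket z v != 0 -> \rank (braA z Psi) = 2%N) \/
  exists a : 'cV[C]_d, forall z, (exists t, braA z Psi = a *m t) /\
    (braket z u != 0 -> braket z v != 0 -> \rank (braA z Psi) = 1%N).
Proof.
move=> rkPsi uv1 rku rkv.
have [a [x ux]] := mxrank1_factor rku; have [b [y vy]] := mxrank1_factor rkv.
have braAE z : braA z Psi = row_mx (braket z u *: a) (braket z v *: b) *m col_mx x y.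
  by rewrite mul_row_col -!scalemxAl -ux -vy; apply: braA_basis.
have xy_free : row_free (col_mx x y).
  rewrite /row_free eqn_leq rank_leq_row /= -addsmxE -[X in (X <= _)%N]rkPsi.
  apply/mxrankS/(submx_trans (sub_braA_basis Psi uv1)).
  by rewrite ux vy; apply: addsmxS; apply: submxMl.
have rk_braA z : braket z u != 0 -> braket z v != 0 ->
    \rank (braA z Psi) = \rank (row_mx a b).
  by move=> zu zv; rewrite braAE mxrankMfree // mxrank_row_mx_scale.
have rka : \rank a = 1%N.
  by apply/eqP; rewrite eqn_leq rank_leq_col -{1}rku ux mxrankM_maxl.
case: (eqVneq (\rank (row_mx a b)) 2) => [rk2|rk_neq2]; [left|right].
  by move=> z zu zv; rewrite rk_braA.
have rkab : \rank (row_mx a b) = \rank a.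
  apply/eqP; rewrite eqn_leq mxrank_row_mxl andbT rka -ltnS ltn_neqAle rk_neq2.
  exact: rank_leq_col.
have [c bc] := col_sub_of_mxrank_row_mx rkab.
exists a => z; split; last by move=> zu zv; rewrite rk_braA // rkab rka.
exists (braket z u *: x + braket z v *: (c *m y)).
by rewrite braAE mul_row_col bc mulmxDr -!scalemxAl -!scalemxAr mulmxA.
Qed.

End Contraction.

Lemma ord2P (i : 'I_2) : i = 0 \/ i = 1.
Proof. by case: i => [[|[|//]]] ?; [left|right]; apply: val_inj. Qed.

Lemma ord2_other (a b c : 'I_2) : b != a -> c != a -> c = b.
Proof. by case: (ord2P a) => ->; case: (ord2P b) => ->; case: (ord2P c) => ->. Qed.

Lemma lift_ord2_neq (a : 'I_2) : lift a ord0 != a.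
Proof. by rewrite eq_sym neq_lift. Qed.

Section Measurements.
Variable C : numClosedFieldType.

Lemma proj_eq_of_braket_eq0 (u v z : 'cV[C]_2) :
  u *m hadj u + v *m hadj v = 1%:M ->
  rank1_proj (v *m hadj v) -> rank1_proj (z *m hadj z) ->
  braket z u = 0 -> z *m hadj z = v *m hadj v.
Proof.
move=> uv1 [vP _] [zP [_ rk_z]] zu0; set c := braket v z.
have zE : z = c *: v.
  rewrite -{1}[z]mul1mx -uv1 mulmxDl -!mulmxA (mx11_scalar (hadj u *m z)).
  rewrite (mx11_scalar (hadj v *m z)) !mul_mx_scalar -/(braket u z) braketC zu0.
  by rewrite rmorph0 scale0r add0r.
move: zP rk_z; rewrite zE mul_hadj_scale -scalemxAl -scalemxAr scalerA vP.
set s := c * c^* => /eqP; rewrite -subr_eq0 -scalerBl scalemx_eq0 => /orP[|/eqP->].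
  rewrite -{3}[s]mulr1 -mulrBr mulf_eq0 subr_eq0 => /orP[/eqP->|/eqP->].
    by rewrite scale0r mxrank0.
  by rewrite scale1r.
by rewrite scaler0 mxrank0.
Qed.

Lemma proportional_scale m n (X : 'M[C]_(m, n)) s s' :
  s != 0 -> s' != 0 -> proportional (s *: X) (s' *: X).
Proof.
by move=> s0 s0'; exists (s / s'); rewrite scalerA divfK // mulf_neq0 ?invr_neq0.
Qed.

Variable P : 'I_2 -> 'I_2 -> 'M[C]_2.
Hypothesis P_meas : forall x, nontriv_proj_meas (P^~ x).

Lemma meas_rank1_proj a x : rank1_proj (P a x).
Proof. by have [P0 [P1 _]] := P_meas x; case: (ord2P a) => ->. Qed.

Lemma meas_sum a b x : b != a -> P a x + P b x = 1%:M.
Proof.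
have [_ [_ P01]] := P_meas x.
by case: (ord2P a) => ->; case: (ord2P b) => -> // _; rewrite // addrC.
Qed.

Lemma meas_outer : exists w : 'I_2 -> 'I_2 -> 'cV[C]_2,
  forall a x, P a x = w a x *m hadj (w a x).
Proof.
have /fin_all_exists [w Pw] : forall ax : 'I_2 * 'I_2,
    exists w : 'cV[C]_2, P ax.1 ax.2 = w *m hadj w.
  by case=> a x; apply/rank1_proj_outer/meas_rank1_proj.
by exists (fun a x => w (a, x)) => a x; apply: Pw (a, x).
Qed.

Hypothesis P_diff : diff_up_to_relabel P.

Lemma meas_cross_neq a a' x x' : x != x' -> P a x != P a' x'.
Proof.
have compl b c y : c != b -> P c y = 1%:M - P b y.
  by move=> cb; rewrite -(meas_sum y cb) addrC addKr.
have diff0 c : P 0 0 != P c 1 by case: (ord2P c) => ->; case: P_diff.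
(* Complementing both sides reduces to the two inequalities of diff_up_to_relabel. *)
have cross b c : P b 0 != P c 1.
  case: (ord2P b) => ->; first exact: diff0.
  rewrite (compl 0 1 0 isT) (compl (lift c ord0) c 1 (neq_lift _ _)).
  by apply: contra (diff0 (lift c ord0)) => /eqP /subrI ->.
by case: (ord2P x) => ->; case: (ord2P x') => -> // _; rewrite eq_sym.
Qed.

Lemma meas_overlap (w : 'I_2 -> 'I_2 -> 'cV[C]_2) :
  (forall a x, P a x = w a x *m hadj (w a x)) ->
  forall a a' x x', x != x' -> braket (w a x) (w a' x') != 0.
Proof.
move=> Pw a a' x x' xx'; apply: contra (meas_cross_neq a (lift a' ord0) xx') => /eqP zu0.
rewrite !Pw; apply/eqP/(proj_eq_of_braket_eq0 _ _ _ zu0); rewrite -!Pw.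
- exact/meas_sum/lift_ord2_neq.
- exact: meas_rank1_proj.
- exact: meas_rank1_proj.
Qed.

End Measurements.

Section TwoMeasurements.
Variables (C : numClosedFieldType) (d m : nat) (Psi : 'M[C]_(2 * d, m)).
Variables (w : 'I_2 -> 'I_2 -> 'cV[C]_2) (rhoax : 'I_2 -> 'I_2 -> 'M[C]_d).
Hypothesis rkPsi : \rank Psi = 2%N.
Hypothesis w_basis : forall a b x, b != a ->
  w a x *m hadj (w a x) + w b x *m hadj (w b x) = 1%:M.
Hypothesis w_overlap : forall a a' x x', x != x' -> braket (w a x) (w a' x') != 0.
Hypothesis rhoaxE : forall a x,
  rhoax a x = braA (w a x) Psi *m hadj (braA (w a x) Psi).

Lemma mxrank_rhoax a x : \rank (rhoax a x) = \rank (braA (w a x) Psi).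
Proof. by rewrite rhoaxE mxrank_mul_hadj. Qed.

Lemma rank2_proportional_of_rhoax_eq0 a x : rhoax a x = 0 ->
  (forall a' x', (a', x') != (a, x) -> \rank (rhoax a' x') = 2%N) /\
  (forall a' x' a'' x'', (a', x') != (a, x) -> (a'', x'') != (a, x) ->
     proportional (rhoax a' x') (rhoax a'' x'')).
Proof.
move=> rho0; set b := lift a ord0; have ba : b != a := lift_ord2_neq a.
have Ma0 : braA (w a x) Psi = 0.
  by apply/eqP; rewrite -mxrank_eq0 -mxrank_rhoax rho0 mxrank0.
have M_scaled a' x' : (a', x') != (a, x) ->
    exists2 g, g != 0 & braA (w a' x') Psi = g *: braA (w b x) Psi.
  rewrite xpair_eqE; case: (eqVneq x' x) => [-> | x'x] /=; rewrite ?andbT => a'a.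
    by exists 1; rewrite ?oner_neq0 // scale1r (ord2_other ba a'a).
  exists (braket (w a' x') (w b x)); first exact: w_overlap.
  by rewrite (braA_basis _ _ (w_basis x ba)) Ma0 scaler0 add0r.
have rho_scaled a' x' : (a', x') != (a, x) ->
    exists2 s, s != 0 & rhoax a' x' = s *: rhoax b x.
  move=> /M_scaled [g g0 gE]; exists (g * g^*); first by rewrite mulf_neq0 ?conjC_eq0.
  by rewrite !rhoaxE gE mul_hadj_scale.
split=> [a' x' /M_scaled [g g0 gE] | a' x' a'' x'' /rho_scaled [s s0 ->] /rho_scaled [s' s0' ->]].
  by rewrite mxrank_rhoax gE (eqmx_scale _ g0) (eqmx_rank (braA_eq0_eqmx (w_basis x ba) Ma0)).
exact: proportional_scale.
Qed.

Lemma rhoax_rank1_dichotomy x1 x2 : x1 != x2 ->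
  \rank (rhoax 0 x1) = 1%N -> \rank (rhoax 1 x1) = 1%N ->
  (\rank (rhoax 0 x2) = 2%N /\ \rank (rhoax 1 x2) = 2%N) \/
  ((forall a x, \rank (rhoax a x) = 1%N) /\
   (forall a x a' x', proportional (rhoax a x) (rhoax a' x'))).
Proof.
rewrite !mxrank_rhoax => x12 rk0 rk1; have x21 : x2 != x1 by rewrite eq_sym.
have [rk2|[col colE]] := braA_rank1_dichotomy rkPsi (w_basis (a:=0) (b:=1) x1 isT) rk0 rk1.
  by left; rewrite !rk2 ?w_overlap.
right.
have rank1 a x : \rank (braA (w a x) Psi) = 1%N.
  case: (eqVneq x x1) => [-> | /(ord2_other x21) ->]; first by case: (ord2P a) => ->.
  by have [_ ->] := colE (w a x2); rewrite ?w_overlap.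
have rho_col a x : exists2 s, s != 0 & rhoax a x = s *: (col *m hadj col).
  have [[t tE] _] := colE (w a x).
  by rewrite rhoaxE tE; apply: mul_hadj_rank1; rewrite -tE rank1.
split=> [a x | a x a' x']; first by rewrite mxrank_rhoax rank1.
have [s s0 ->] := rho_col a x; have [s' s0' ->] := rho_col a' x'.
exact: proportional_scale.
Qed.

End TwoMeasurements.

Theorem lemma5 (C : numClosedFieldType) (d : nat) (rho : 'M[C]_(2 * d))
    (P : 'I_2 -> 'I_2 -> 'M[C]_2) :
  is_state rho ->
  \rank rho = 2%N ->
  (forall x : 'I_2, nontriv_proj_meas (fun a => P a x)) ->
  diff_up_to_relabel P ->
  let rhoax := fun a x : 'I_2 => ptrA_mul (P a x) rho in
  (* (i) *)
  (forall a x : 'I_2, rhoax a x = 0 ->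
     (forall a' x' : 'I_2, (a', x') != (a, x) -> \rank (rhoax a' x') = 2%N) /\
     (forall a' x' a'' x'' : 'I_2, (a', x') != (a, x) -> (a'', x'') != (a, x) ->
        proportional (rhoax a' x') (rhoax a'' x''))) /\
  (* (ii) *)
  (forall x1 x2 : 'I_2, x1 != x2 ->
     \rank (rhoax 0 x1) = 1%N -> \rank (rhoax 1 x1) = 1%N ->
     (\rank (rhoax 0 x2) = 2%N /\ \rank (rhoax 1 x2) = 2%N) \/
     ((forall a x : 'I_2, \rank (rhoax a x) = 1%N) /\
      (forall a x a' x' : 'I_2, proportional (rhoax a x) (rhoax a' x')))).
Proof.
move=> [rho_psd _] rk_rho P_meas P_diff rhoax.
have [Psi rhoE] := psd_factor rho_psd.
have rkPsi : \rank Psi = 2%N by rewrite -mxrank_mul_hadj -rhoE.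
have [w Pw] := meas_outer P_meas.
have w_basis a b x : b != a -> w a x *m hadj (w a x) + w b x *m hadj (w b x) = 1%:M.
  by rewrite -!Pw; apply: meas_sum.
have w_overlap := meas_overlap P_meas P_diff Pw.
have rhoaxE a x : rhoax a x = braA (w a x) Psi *m hadj (braA (w a x) Psi).
  by rewrite /rhoax Pw rhoE ptrA_mul_outer.
split; [exact: rank2_proportional_of_rhoax_eq0 rhoaxE | exact: rhoax_rank1_dichotomy rhoaxE].
Qed.
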